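(* Let $\mathcal{S}=(\mathbb{Z}_n,\mathcal{S}_1,\dots,\mathcal{S}_4)$ be a cyclic triomino set with $\gcd(n,6)=1$, and let $m$, the filler $F$ and the brick $B$ be as defined below. Suppose $W\subset\{((3m+2)x,5y,6z): x,y,z\in\mathbb{Z}\}$ satisfies $W+(0,0,6n)=W$, $W\oplus B$ is non-overlapping, and $F$ tiles $\mathbb{Z}^3\setminus(W\oplus B)$. Then the $\mathcal{S}$-cyclic triomino problem is solvable.
   Context: Cyclic triomino set: $\mathcal{S}_i\subset\mathbb{Z}_n^3$ invariant under $(a,b,c)\mapsto(a+k,b+k,c+k)$ for all $k$; with $u_1=(1,0),u_2=(0,1),u_3=(-1,0),u_4=(0,-1)$ (indices mod 4), the $\mathcal{S}$-cyclic triomino problem is solvable if some $\mathcal{T}:\mathbb{Z}^2\to\mathbb{Z}_n$ has $(\mathcal{T}(s),\mathcal{T}(s+u_i),\mathcal{T}(s+u_{i+1}))\in\mathcal{S}_i$ for all $s$, $1\le i\le4$. $A\oplus B=\{a+b\}$, non-overlapping if each sum has a unique representation; $P$ tiles $E$ if $W'\oplus P=E$ non-overlapping for some $W'$; $cA=\{ca\}$; $I_{a,b}=\{x\in\mathbb{Z}: a\le x\le b\}$. Blockers (subsets of $\mathbb{Z}$): $\alpha_0=\emptyset,\alpha_1=\{0,5\}$, $\beta_0=\{1,4\},\beta_1=\emptyset$, $\gamma_0=\emptyset,\gamma_1=\{2,3\}$. With $\delta(0)=1$, $\delta(i)=0$ for $i\ne0$: $\alpha_T=\bigcup_{i=0}^{n-1}(n\alpha_{\delta(i)}+6i)$,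 and $\beta_T,\gamma_T$ likewise. $O=\{-1,0,1\}^2\setminus\{(0,0)\}$; filler $F=O\times\{0,n\}$. For each $i$ let $\overline{K_i}\subset\mathbb{Z}_n^3$ be a set of representatives with $\overline{K_i}\oplus\{(k,k,k):k\in\mathbb{Z}_n\}$ non-overlapping and equal to $\mathbb{Z}_n^3\setminus\mathcal{S}_i$; entries of $\mathbb{Z}_n$ are identified with integers in $\{0,\dots,n-1\}$. Let $m=\sum_{i=1}^4|\overline{K_i}|$ and list the elements of $\overline{K_1},\overline{K_2},\overline{K_3},\overline{K_4}$ in order as $(a_1,b_1,c_1),\dots,(a_m,b_m,c_m)$, with $(a_i,b_i,c_i)\in\overline{K_{g(i)}}$. Empty brick $B_0=I_{0,3m+1}\times I_{0,4}\times I_{0,6n-1}\setminus\bigcup_{i=0}^{m-1}(O\times I_{0,6n-1}+(3i+2,2,0))$. Define $T_{0,i,j}=O\times\alpha_T+(3i-1,2,-6j)$; $T_{1,i,j}=T_{5,i,j}=O\times\beta_T+(3i-3m-3,2,-6j)$; $T_{2,i,j}=O\times\gamma_T+(3i-1,-3,-6j)$; $T_{3,i,j}=O\times\beta_T+(3i+3m+1,2,-6j)$; $T_{4,i,j}=O\times\gamma_T+(3i-1,7,-6j)$. The brick is $B=B_0\cup\bigcup_{i=1}^m\big(T_{0,i,a_i}\cup T_{g(i),i,b_i}\cup T_{g(i)+1,i,c_i}\big)$. *)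

From Stdlib Require Import ZArith List Lia.
Open Scope Z_scope.

Definition pt := (Z * Z * Z)%type.
Definition zset := pt -> Prop.

Definition padd (p q : pt) : pt :=
  let '(x1, y1, z1) := p in let '(x2, y2, z2) := q in (x1 + x2, y1 + y2, z1 + z2).

Definition sumset (A B : zset) : zset :=
  fun w => exists a b, A a /\ B b /\ w = padd a b.
Definition nonoverlap (A B : zset) : Prop :=
  forall a a' b b', A a -> A a' -> B b -> B b' -> padd a b = padd a' b' -> a = a' /\ b = b'.
Definition tiles (P E : zset) : Prop :=
  exists W', nonoverlap W' P /\ forall w, E w <-> sumset W' P w.

Definition Icc (a b x : Z) : Prop := a <= x <= b.

Definition O2 (x y : Z) : Prop := -1 <= x <= 1 /\ -1 <= y <= 1 /\ ~ (x = 0 /\ y = 0).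

Definition prism (X : Z -> Prop) (p q r : Z) : zset :=
  fun w => let '(x, y, z) := w in O2 (x - p) (y - q) /\ X (z - r).

Definition alpha (k : nat) (z : Z) : Prop :=
  match k with O => False | _ => z = 0 \/ z = 5 end.
Definition beta (k : nat) (z : Z) : Prop :=
  match k with O => z = 1 \/ z = 4 | _ => False end.
Definition gamma (k : nat) (z : Z) : Prop :=
  match k with O => False | _ => z = 2 \/ z = 3 end.
Definition delta (i : nat) : nat := if Nat.eqb i 0 then 1%nat else 0%nat.

Definition blockT (X : nat -> Z -> Prop) (n : nat) (z : Z) : Prop :=
  exists i : nat, (i < n)%nat /\
    exists a, X (delta i) a /\ z = Z.of_nat n * a + 6 * Z.of_nat i.

Definition filler (n : nat) : zset :=
  fun w => let '(x, y, z) := w in O2 x y /\ (z = 0 \/ z = Z.of_nat n).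

Definition Tset (n m k i : nat) (j : Z) : zset :=
  let i' := Z.of_nat i in let m' := Z.of_nat m in
  match k with
  | 0%nat => prism (blockT alpha n) (3 * i' - 1) 2 (- 6 * j)
  | 1%nat | 5%nat => prism (blockT beta n) (3 * i' - 3 * m' - 3) 2 (- 6 * j)
  | 2%nat => prism (blockT gamma n) (3 * i' - 1) (-3) (- 6 * j)
  | 3%nat => prism (blockT beta n) (3 * i' + 3 * m' + 1) 2 (- 6 * j)
  | 4%nat => prism (blockT gamma n) (3 * i' - 1) 7 (- 6 * j)
  | _ => fun _ => False
  end.

(* Elements of Z_n are identified with integers in {0,...,n-1}. *)
Definition inZn (n : nat) (a : Z) : Prop := 0 <= a < Z.of_nat n.

Definition cyclic_triomino_set (n : nat) (S : nat -> Z -> Z -> Z -> Prop) : Prop :=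
  forall i, (1 <= i <= 4)%nat -> forall a b c k, inZn n a -> inZn n b -> inZn n c ->
    (S i a b c <-> S i ((a + k) mod Z.of_nat n) ((b + k) mod Z.of_nat n) ((c + k) mod Z.of_nat n)).

Definition rep (n : nat) (Ki : list pt) (j : nat) (s a b c : Z) : Prop :=
  (j < length Ki)%nat /\ inZn n s /\
  let '(x, y, z) := nth j Ki (0, 0, 0) in
  a = (x + s) mod Z.of_nat n /\ b = (y + s) mod Z.of_nat n /\ c = (z + s) mod Z.of_nat n.

(* Ki (listed without repetition) is a set of representatives:
   Ki (+) {(k,k,k)} is non-overlapping and equals Z_n^3 \ S_i *)
Definition rep_system (n : nat) (S : nat -> Z -> Z -> Z -> Prop) (i : nat) (Ki : list pt) : Prop :=
  Forall (fun t => let '(x, y, z) := t in inZn n x /\ inZn n y /\ inZn n z) Ki /\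
  (forall a b c, inZn n a -> inZn n b -> inZn n c ->
     ((exists j s, rep n Ki j s a b c) <-> ~ S i a b c)) /\
  (forall a b c j s j' s', rep n Ki j s a b c -> rep n Ki j' s' a b c -> j = j' /\ s = s').

Definition listing (K : nat -> list pt) : list (nat * pt) :=
  map (pair 1%nat) (K 1%nat) ++ map (pair 2%nat) (K 2%nat) ++
  map (pair 3%nat) (K 3%nat) ++ map (pair 4%nat) (K 4%nat).

Definition mK (K : nat -> list pt) : nat := length (listing K).

Definition B0 (n m : nat) : zset :=
  fun w => let '(x, y, z) := w in
    Icc 0 (3 * Z.of_nat m + 1) x /\ Icc 0 4 y /\ Icc 0 (6 * Z.of_nat n - 1) z /\
    ~ (exists i : nat, (i < m)%nat /\
         prism (Icc 0 (6 * Z.of_nat n - 1)) (3 * Z.of_nat i + 2) 2 0 w).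

(* the brick B; the i-th (1-based) listed element is (g(i), (a_i,b_i,c_i)) *)
Definition brick (n : nat) (K : nat -> list pt) : zset :=
  fun w =>
    B0 n (mK K) w \/
    exists i : nat, (1 <= i <= mK K)%nat /\
      let '(g, (a, b, c)) := nth (i - 1) (listing K) (0%nat, (0, 0, 0)) in
      Tset n (mK K) 0 i a w \/ Tset n (mK K) g i b w \/ Tset n (mK K) (g + 1) i c w.

(* u_1..u_4, indices mod 4 *)
Definition u (i : nat) : Z * Z :=
  match Nat.modulo i 4 with
  | 1%nat => (1, 0) | 2%nat => (0, 1) | 3%nat => (-1, 0) | _ => (0, -1)
  end.
Definition add2 (s t : Z * Z) : Z * Z := (fst s + fst t, snd s + snd t).

Definition solvable (n : nat) (S : nat -> Z -> Z -> Z -> Prop) : Prop :=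
  exists T : Z * Z -> Z, (forall s, inZn n (T s)) /\
    forall s i, (1 <= i <= 4)%nat ->
      S i (T s) (T (add2 s (u i))) (T (add2 s (u (i + 1)))).

From Stdlib Require Import ZArith List Lia Classical ClassicalEpsilon.
Open Scope Z_scope.

(* Choose in every column s = (x, y) of the lattice a brick of W, at height
   6 z(s), and put T(s) = z(s) mod n.  If (T(s), T(s + u_g), T(s + u_(g+1)))
   were not in S_g, it would be a translate (a, b, c) + (t, t, t) of a listed
   representative, so the hole of the brick over s reserved for it would
   receive its three pieces T_0, T_g, T_(g+1) all at the same height t.  As
   bricks of one column differ in height by multiples of 6 n and, since
   gcd(n, 6) = 1, no blocker contains a height congruent to n modulo 6 n, the
   cell just above the centre of that hole at height 6 t + n is covered by no
   brick.  A filler ring must cover it; but wherever that ring is centred, it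
   meets a cell of B0 or the alpha or a gamma blocker of the aligned pieces. *)

Definition brick_width (K : nat -> list pt) : Z := 3 * Z.of_nat (mK K) + 2.

Definition column_point (K : nat -> list pt) (s : Z * Z) (z : Z) : pt :=
  (brick_width K * fst s, 5 * snd s, 6 * z).

(* [i] is 1-based, as in [brick]; relative to its brick this hole of [B0] is
   centred at (3 (i-1) + 2, 2). *)
Definition hole_center (K : nat -> list pt) (s : Z * Z) (i : nat) : Z * Z :=
  (brick_width K * fst s + 3 * Z.of_nat i - 1, 5 * snd s + 2).

Definition ring (c : Z * Z) (x y : Z) : Prop := O2 (x - fst c) (y - snd c).

(* The piece T_k of the brick over column [add2 s (src k)] lies in a hole of
   the brick over column [s]. *)
Definition src (k : nat) : Z * Z :=
  match k with
  | 1%nat | 5%nat => (1, 0)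
  | 2%nat => (0, 1)
  | 3%nat => (-1, 0)
  | 4%nat => (0, -1)
  | _ => (0, 0)
  end.

Lemma src_u k : (1 <= k <= 5)%nat -> src k = u k.
Proof. intros Hk. destruct k as [|[|[|[|[|[|k]]]]]]; reflexivity || lia. Qed.

Lemma add2_src0 s : add2 s (src 0) = s.
Proof. destruct s as [x y]. unfold add2; cbn. f_equal; ring. Qed.

Definition blocker (n k : nat) : Z -> Prop :=
  match k with
  | 0%nat => blockT alpha n
  | 1%nat | 3%nat | 5%nat => blockT beta n
  | 2%nat | 4%nat => blockT gamma n
  | _ => fun _ => False
  end.

Definition solid (m : nat) (x y : Z) : Prop :=
  0 <= x <= 3 * Z.of_nat m + 1 /\ 0 <= y <= 4 /\
  forall i, (i < m)%nat -> ~ O2 (x - (3 * Z.of_nat i + 2)) (y - 2).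

Definition listed (K : nat -> list pt) (i : nat) (e : nat * pt) : Prop :=
  (1 <= i <= mK K)%nat /\ nth (i - 1) (listing K) (0%nat, (0, 0, 0)) = e.

Definition piece (e : nat * pt) (k : nat) (j : Z) : Prop :=
  let '(g, (a, b, c)) := e in
  (k = 0%nat /\ j = a) \/ (k = g /\ j = b) \/ (k = (g + 1)%nat /\ j = c).

Lemma In_listing K g t : In (g, t) (listing K) <-> (1 <= g <= 4)%nat /\ In t (K g).
Proof.
  unfold listing. rewrite !in_app_iff, !in_map_iff. split.
  - intros [[x [E Hx]]|[[x [E Hx]]|[[x [E Hx]]|[x [E Hx]]]]];
      injection E as <- <-; split; auto; lia.
  - intros [Hg Ht].
    assert (g = 1 \/ g = 2 \/ g = 3 \/ g = 4)%nat as [-> | [-> | [-> | ->]]] by lia; eauto 7.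
Qed.

Lemma listed_In K i e : listed K i e -> In e (listing K).
Proof. intros [Hi <-]. apply nth_In. unfold mK, pt in *. lia. Qed.

Lemma In_listed K e : In e (listing K) -> exists i, listed K i e.
Proof.
  intros He. destruct (In_nth _ _ (0%nat, (0, 0, 0)) He) as [i [Hi Ei]].
  exists (S i). split; [unfold mK, pt in *; lia|]. rewrite Nat.sub_1_r. exact Ei.
Qed.

Lemma listed_unique K i e e' : listed K i e -> listed K i e' -> e = e'.
Proof. intros [_ <-] [_ <-]. reflexivity. Qed.

Lemma listed_group K i g t : listed K i (g, t) -> (1 <= g <= 4)%nat.
Proof. intros Hl. apply listed_In, In_listing in Hl. tauto. Qed.

Lemma listed_piece_le5 K i e k j : listed K i e -> piece e k j -> (k <= 5)%nat.
Proof.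
  destruct e as [g [[a b] c]]. intros Hi%listed_group. simpl. lia.
Qed.

Lemma piece_gamma g a b c : (1 <= g <= 4)%nat ->
  exists k j, piece (g, (a, b, c)) k j /\ (k = 2 \/ k = 4)%nat.
Proof.
  intros Hg. simpl.
  assert (g = 1 \/ g = 2 \/ g = 3 \/ g = 4)%nat as [-> | [-> | [-> | ->]]] by lia.
  - exists 2%nat, c. lia.
  - exists 2%nat, b. lia.
  - exists 4%nat, c. lia.
  - exists 4%nat, b. lia.
Qed.

Lemma brick_inv n K d : brick n K d ->
  B0 n (mK K) d \/ exists i e k j, listed K i e /\ piece e k j /\ Tset n (mK K) k i j d.
Proof.
  intros [Hd|[i [Hi Hd]]]; [now left|right].
  destruct (nth (i - 1) (listing K) (0%nat, (0, 0, 0))) as [g [[a b] c]] eqn:E.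
  exists i, (g, (a, b, c)).
  destruct Hd as [Hd|[Hd|Hd]]; [exists 0%nat, a | exists g, b | exists (g + 1)%nat, c];
    repeat split; auto; simpl; tauto.
Qed.

Lemma brick_of_piece n K i e k j d : listed K i e -> piece e k j -> Tset n (mK K) k i j d ->
  brick n K d.
Proof.
  intros [Hi E] Hp Hd. right. exists i. split; [exact Hi|]. rewrite E.
  destruct e as [g [[a b] c]]. destruct Hp as [[-> ->]|[[-> ->]|[-> ->]]]; tauto.
Qed.

Lemma blockT_eq X n v v' : v = v' -> blockT X n v -> blockT X n v'.
Proof. now intros ->. Qed.

Lemma blocker_eq n k v v' : v = v' -> blocker n k v -> blocker n k v'.
Proof. now intros ->. Qed.

Lemma Tset_spec n m k i j x y z : (k <= 5)%nat ->
  Tset n m k i j (x, y, z) <->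
  O2 (x - (3 * Z.of_nat i - 1 - (3 * Z.of_nat m + 2) * fst (src k)))
     (y - (2 - 5 * snd (src k))) /\
  blocker n k (z + 6 * j).
Proof.
  intros Hk. destruct k as [|[|[|[|[|[|k]]]]]]; try lia;
    cbn [Tset blocker prism src fst snd]; unfold O2;
    split; intros [Hxy Hz]; (split; [lia|]); revert Hz; apply blockT_eq; lia.
Qed.

Lemma B0_iff n m x y z :
  B0 n m (x, y, z) <-> solid m x y /\ 0 <= z <= 6 * Z.of_nat n - 1.
Proof.
  unfold B0, solid, Icc, prism. split.
  - intros (Hx & Hy & Hz & Hhole). repeat split; try lia.
    intros i Hi Hr. apply Hhole. exists i. split; [exact Hi|]. split; [exact Hr|lia].
  - intros ((Hx & Hy & Hhole) & Hz). repeat split; try lia.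
    intros (i & Hi & Hr & _). exact (Hhole i Hi Hr).
Qed.

Lemma B0_corner n m z : 0 <= z <= 6 * Z.of_nat n - 1 -> B0 n m (0, 0, z).
Proof.
  intros Hz. apply B0_iff. split; [|exact Hz].
  unfold solid, O2. repeat split; lia.
Qed.

Lemma blocker_alpha_0 n : (0 < n)%nat -> blocker n 0 0.
Proof. intros Hn. exists 0%nat. split; [lia|]. exists 0. split; [now left | ring]. Qed.

Lemma blocker_gamma_2n n k : (0 < n)%nat -> (k = 2 \/ k = 4)%nat ->
  blocker n k (2 * Z.of_nat n).
Proof.
  intros Hn [-> | ->]; exists 0%nat; (split; [lia|]); exists 2; split; (now left) || ring.
Qed.

Lemma Zgcd_6_of_nat n : Nat.gcd n 6 = 1%nat -> Z.gcd (Z.of_nat n) 6 = 1.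
Proof.
  intros H. rewrite Nat.gcd_comm, <- Nat.Lcm0.gcd_mod in H.
  rewrite Z.gcd_comm, <- Z.gcd_mod by lia.
  change (Z.gcd (Z.of_nat n mod Z.of_nat 6) (Z.of_nat 6) = 1).
  rewrite <- Nat2Z.inj_mod.
  assert (Hb : (n mod 6 < 6)%nat) by (apply Nat.mod_upper_bound; lia).
  destruct (n mod 6)%nat as [|[|[|[|[|[|r]]]]]]; try discriminate; try reflexivity; lia.
Qed.

(* Blocker heights are [n a + 6 t] with [t < n]; for [t <> 0] such a height is
   congruent to [n] modulo [6 n] only if [n] divides [6 t]. *)
Lemma blocker_avoids_n n k v : (0 < n)%nat -> Nat.gcd n 6 = 1%nat ->
  blocker n k v -> ~ (6 * Z.of_nat n | v - Z.of_nat n).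
Proof.
  intros Hn Hg Hv [r Hr].
  assert (Hblk : exists t a, (t < n)%nat /\ v = Z.of_nat n * a + 6 * Z.of_nat t /\
             (t = 0%nat /\ (a = 0 \/ a = 2 \/ a = 3 \/ a = 5) \/ t <> 0%nat)).
  { destruct k as [|[|[|[|[|[|k]]]]]]; try contradiction; destruct Hv as (t & Ht & a & Ha & ->);
      exists t, a; unfold delta in Ha; destruct (Nat.eqb_spec t 0); simpl in Ha; lia. }
  destruct Hblk as (t & a & Ht & -> & [[-> Ha] | Ht0]).
  - assert (a - 1 = 6 * r) by nia. lia.
  - assert (Hdiv : (Z.of_nat n | 6 * Z.of_nat t)) by (exists (6 * r + 1 - a); lia).
    apply Z.gauss in Hdiv; [|now apply Zgcd_6_of_nat].
    destruct Hdiv as [q Hq]. destruct (Z.le_gt_cases q 0); nia.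
Qed.

Ltac solve_pt_eq :=
  cbn [padd column_point add2 fst snd]; repeat (apply pair_equal_spec; split); lia.

Lemma Zmul_floor_unique L q q' x : 0 <= x - L * q < L -> 0 <= x - L * q' < L -> q = q'.
Proof. intros H H'. nia. Qed.

Lemma hole_center_near_eq K s s' i i' :
  (1 <= i <= mK K)%nat -> (1 <= i' <= mK K)%nat ->
  -2 <= fst (hole_center K s i) - fst (hole_center K s' i') <= 2 ->
  -2 <= snd (hole_center K s i) - snd (hole_center K s' i') <= 2 ->
  s = s' /\ i = i'.
Proof.
  destruct s as [X Y], s' as [X' Y']. unfold hole_center, brick_width; cbn [fst snd].
  intros Hi Hi' Hx Hy.
  assert (X = X').
  { destruct (Z.lt_trichotomy X X') as [H|[H|H]]; [nia|exact H|nia]. }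
  subst X'. split; [f_equal; lia | lia].
Qed.

Lemma solid_near_hole K s s' i x y : (1 <= i <= mK K)%nat ->
  -1 <= x - fst (hole_center K s i) <= 1 -> -1 <= y - snd (hole_center K s i) <= 1 ->
  solid (mK K) (x - brick_width K * fst s') (y - 5 * snd s') -> s' = s.
Proof.
  destruct s as [X Y], s' as [X' Y']. unfold hole_center, solid, brick_width; cbn [fst snd].
  intros Hi Hx Hy (Hbx & Hby & _).
  f_equal; [apply (Zmul_floor_unique (3 * Z.of_nat (mK K) + 2) _ _ x)
           |apply (Zmul_floor_unique 5 _ _ y)]; lia.
Qed.

Lemma solid_hole_center m i : (1 <= i <= m)%nat -> solid m (3 * Z.of_nat i - 1) 2.
Proof. intros Hi. unfold solid, O2. split; [lia|]. split; [lia|]. intros i0 _. lia. Qed.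

Lemma solid_top_row m x : 0 <= x <= 3 * Z.of_nat m + 1 -> solid m x 4.
Proof. intros Hx. unfold solid, O2. split; [lia|]. split; [lia|]. intros i0 _. lia. Qed.

Lemma ring_not_solid K s s' i x y : (1 <= i <= mK K)%nat ->
  ring (hole_center K s i) x y -> ~ solid (mK K) (x - brick_width K * fst s') (y - 5 * snd s').
Proof.
  intros Hi Hr Hs. unfold ring, O2 in Hr.
  assert (s' = s) as -> by (apply (solid_near_hole K s s' i x y); tauto).
  destruct Hs as (_ & _ & Hhole). apply (Hhole (i - 1)%nat); [lia|].
  revert Hr. destruct s as [X Y]. unfold O2, hole_center, brick_width; cbn [fst snd]. lia.
Qed.

Lemma adjacent_rings_meet c x y : ring c x y ->
  exists x' y', ring c x' y' /\ ring (x, y) x' y'.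
Proof.
  destruct c as [cx cy]. unfold ring, O2; cbn [fst snd]. intros H.
  destruct (Z.eq_dec x cx); [exists (cx + 1), y; lia|].
  destruct (Z.eq_dec y cy); [exists x, (cy + 1); lia|].
  exists x, cy. lia.
Qed.

Lemma filler_ring n W' x y z : nonoverlap W' (filler n) -> sumset W' (filler n) (x, y, z) ->
  exists q e, ring q x y /\ (e = 0 \/ e = Z.of_nat n) /\
    (forall x' y', ring q x' y' ->
       sumset W' (filler n) (x', y', z) /\ sumset W' (filler n) (x', y', z + Z.of_nat n - 2 * e)) /\
    ~ sumset W' (filler n) (fst q, snd q, z).
Proof.
  intros Hno ([[a b] c] & [[f1 f2] f3] & Hw & [Hf He] & E).
  cbn [padd] in E. injection E as -> -> ->.
  exists (a, b), f3. split; [unfold ring, O2 in *; cbn [fst snd]; lia|].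
  split; [exact He|]. split.
  - intros x' y' Hr. unfold ring in Hr; cbn [fst snd] in Hr. split.
    + exists (a, b, c), (x' - a, y' - b, f3).
      split; [exact Hw|]. split; [split; [exact Hr | exact He] | solve_pt_eq].
    + exists (a, b, c), (x' - a, y' - b, Z.of_nat n - f3).
      split; [exact Hw|]. split; [split; [exact Hr | lia] | solve_pt_eq].
  - intros ([[a' b'] c'] & [[g1 g2] g3] & Hw' & [Hg Hge] & E').
    cbn [padd fst snd] in E'. injection E' as Ea Eb Ec.
    destruct (adjacent_rings_meet (a', b') a b) as (p1 & p2 & Hp' & Hp).
    { unfold ring, O2 in *; cbn [fst snd]; lia. }
    unfold ring in Hp, Hp'; cbn [fst snd] in Hp, Hp'.
    destruct (Hno (a, b, c) (a', b', c') (p1 - a, p2 - b, f3) (p1 - a', p2 - b', g3) Hw Hw')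
      as [Ew _]; [split; auto | split; auto | solve_pt_eq |].
    injection Ew as -> -> ->. unfold O2 in Hg. lia.
Qed.

Section FillerTiling.

Variables (n : nat) (K : nat -> list pt) (W W' : zset).
Hypothesis n_pos : (0 < n)%nat.
Hypothesis W_lattice : forall w, W w -> exists x y z, w = column_point K (x, y) z.
Hypothesis W_periodic : forall w, W w <-> W (padd w (0, 0, 6 * Z.of_nat n)).
Hypothesis W_nonoverlap : nonoverlap W (brick n K).
Hypothesis W'_nonoverlap : nonoverlap W' (filler n).
Hypothesis filled_iff : forall w, ~ sumset W (brick n K) w <-> sumset W' (filler n) w.

Local Notation N := (Z.of_nat n).
Local Notation L := (brick_width K).
Local Notation covered := (sumset W (brick n K)).
Local Notation filled := (sumset W' (filler n)).

Lemma W_column_shift s z r : W (column_point K s z) -> W (column_point K s (z + N * r)).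
Proof.
  assert (Hstep : forall z, padd (column_point K s z) (0, 0, 6 * N) = column_point K s (z + N))
    by (intros; solve_pt_eq).
  intros Hw. induction r using Z.peano_ind.
  - now rewrite Z.mul_0_r, Z.add_0_r.
  - apply W_periodic in IHr. rewrite Hstep in IHr.
    now replace (z + N * Z.succ r) with (z + N * r + N) by lia.
  - apply W_periodic. rewrite Hstep.
    now replace (z + N * Z.pred r + N) with (z + N * r) by lia.
Qed.

(* Two bricks of one column closer than [6 n] would overlap in the corner
   column [{(0, 0)} x I_{0, 6n-1}] of [B0]. *)
Lemma W_column_congr s z z' :
  W (column_point K s z) -> W (column_point K s z') -> (N | z' - z).
Proof.
  intros Hw Hw'.
  pose proof (Z.div_mod (z' - z) N ltac:(lia)) as Ed.
  pose proof (Z.mod_pos_bound (z' - z) N ltac:(lia)) as Eb.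
  set (r := (z' - z) / N) in *. set (rho := (z' - z) mod N) in *.
  assert (Hw2 : W (column_point K s (z + rho))).
  { replace (z + rho) with (z' + N * - r) by lia. now apply W_column_shift. }
  destruct (W_nonoverlap _ _ (0, 0, 6 * rho) (0, 0, 0) Hw Hw2) as [E _].
  - left. apply B0_corner. lia.
  - left. apply B0_corner. lia.
  - solve_pt_eq.
  - cbn [padd column_point] in E. apply pair_equal_spec in E as [_ E]. exists r. lia.
Qed.

Lemma W_column_mod s z z' :
  W (column_point K s z) -> z mod N = z' mod N -> W (column_point K s z').
Proof.
  intros Hw E.
  replace z' with (z + N * (z' / N - z / N)).
  - now apply W_column_shift.
  - pose proof (Z.div_mod z N ltac:(lia)). pose proof (Z.div_mod z' N ltac:(lia)). lia.
Qed.

Lemma covered_solid s z0 x y h : W (column_point K s z0) ->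
  solid (mK K) (x - L * fst s) (y - 5 * snd s) -> covered (x, y, h).
Proof.
  intros Hw Hs.
  pose proof (Z.div_mod (h - 6 * z0) (6 * N) ltac:(lia)) as Ed.
  pose proof (Z.mod_pos_bound (h - 6 * z0) (6 * N) ltac:(lia)) as Eb.
  set (r := (h - 6 * z0) / (6 * N)) in *.
  exists (column_point K s (z0 + N * r)), (x - L * fst s, y - 5 * snd s, h - 6 * z0 - 6 * N * r).
  split; [now apply W_column_shift|]. split; [|solve_pt_eq].
  left. apply B0_iff. split; [exact Hs | lia].
Qed.

Lemma covered_piece s i e k j z x y h : listed K i e -> piece e k j ->
  W (column_point K (add2 s (src k)) z) -> ring (hole_center K s i) x y ->
  blocker n k (h - 6 * z + 6 * j) -> covered (x, y, h).
Proof.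
  intros Hi Hp Hw Hr Hb.
  destruct s as [X Y]. destruct (src k) as [dx dy] eqn:Es.
  exists (column_point K (add2 (X, Y) (dx, dy)) z),
    (x - L * (X + dx), y - 5 * (Y + dy), h - 6 * z).
  split; [exact Hw|]. split; [|solve_pt_eq].
  apply (brick_of_piece n K i e k j _ Hi Hp), Tset_spec;
    [exact (listed_piece_le5 K i e k j Hi Hp)|].
  rewrite Es. unfold ring, hole_center, brick_width, O2 in *; cbn [fst snd] in *.
  split; [lia|]. revert Hb. apply blocker_eq. lia.
Qed.

Lemma covered_inv x y h : covered (x, y, h) ->
  (exists s z, W (column_point K s z) /\ solid (mK K) (x - L * fst s) (y - 5 * snd s)) \/
  (exists s i e k j z, listed K i e /\ piece e k j /\ W (column_point K (add2 s (src k)) z) /\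
     ring (hole_center K s i) x y /\ blocker n k (h - 6 * z + 6 * j)).
Proof.
  intros (w & [[d1 d2] d3] & Hw & Hd & E).
  destruct (W_lattice w Hw) as (X & Y & z & ->).
  cbn [padd column_point fst snd] in E.
  apply pair_equal_spec in E as [[-> ->]%pair_equal_spec ->].
  destruct (brick_inv n K _ Hd) as [H0 | (i & e & k & j & Hi & Hp & HT)].
  - left. exists (X, Y), z. split; [exact Hw|].
    apply B0_iff in H0. cbn [fst snd].
    replace (L * X + d1 - L * X) with d1 by lia. replace (5 * Y + d2 - 5 * Y) with d2 by lia.
    tauto.
  - right. apply Tset_spec in HT as [Hr Hb]; [|exact (listed_piece_le5 K i e k j Hi Hp)].
    destruct (src k) as [dx dy] eqn:Es.
    exists (X - dx, Y - dy), i, e, k, j, z. rewrite Es.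
    replace (add2 (X - dx, Y - dy) (dx, dy)) with (X, Y) by (unfold add2; cbn; f_equal; lia).
    do 3 (split; [assumption|]). split.
    + unfold ring, hole_center, brick_width, O2 in *; cbn [fst snd] in *. lia.
    + revert Hb. apply blocker_eq. lia.
Qed.

Lemma covered_of_not_filled w : ~ filled w -> covered w.
Proof. intros Hf. apply NNPP. intros Hc. now apply Hf, filled_iff. Qed.

(* If column [s] carried no brick, the centre of its first hole would be
   filled, so the centre of the filler ring around it would be covered; but
   whatever covers that point also covers a cell of the filler ring. *)
Lemma column_nonempty s : (1 <= mK K)%nat -> exists z, W (column_point K s z).
Proof.
  intros Hm. apply NNPP. intros Hne.
  assert (Hempty : forall z, ~ W (column_point K s z)) by (intros z Hz; apply Hne; eauto).
  destruct (hole_center K s 1) as [cx cy] eqn:Ec.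
  assert (Hc : ~ covered (cx, cy, 0)).
  { intros [(s' & z & Hw & Hs) | (s' & i & e & k & j & z & Hi & _ & _ & Hr & _)]%covered_inv.
    - apply (Hempty z). replace s with s'; [exact Hw|].
      apply (solid_near_hole K s s' 1 cx cy); rewrite ?Ec; cbn [fst snd]; lia || exact Hs.
    - destruct (hole_center_near_eq K s' s i 1) as [-> ->]; [apply Hi | lia | ..];
        unfold ring, O2 in Hr; rewrite Ec in *; cbn [fst snd] in *; lia. }
  apply filled_iff in Hc.
  destruct (filler_ring n W' cx cy 0 W'_nonoverlap Hc) as ([qx qy] & ez & Hq & _ & Hring & Hqf).
  apply covered_of_not_filled in Hqf. cbn [fst snd] in Hq, Hqf.
  destruct (covered_inv _ _ _ Hqf)
    as [(s' & z & Hw & Hs) | (s' & i & e & k & j & z & Hi & Hp & Hw & Hr & Hb)].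
  - apply (Hempty z). replace s with s'; [exact Hw|].
    apply (solid_near_hole K s s' 1 qx qy); rewrite ?Ec; cbn [fst snd];
      unfold ring, O2 in Hq; cbn [fst snd] in Hq; lia || exact Hs.
  - destruct (adjacent_rings_meet _ _ _ Hr) as (x & y & Hx & Hy).
    apply (filled_iff (x, y, 0)); [exact (proj1 (Hring x y Hy)) |].
    now apply (covered_piece s' i e k j z).
Qed.

Definition aligned (s : Z * Z) (e : nat * pt) (t : Z) : Prop :=
  forall k j, piece e k j -> W (column_point K (add2 s (src k)) (t + j)).

(* Only the hole's own pieces can reach the cell above its centre, and they
   reach it at heights congruent to [n] modulo [6 n], where no blocker lies. *)
Lemma aligned_hole_uncovered s i e t : Nat.gcd n 6 = 1%nat -> listed K i e -> aligned s e t ->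
  ~ covered (fst (hole_center K s i), snd (hole_center K s i) + 1, 6 * t + N).
Proof.
  intros Hcop Hi Hal
    [(s' & z & Hw & Hs) | (s' & i' & e' & k & j & z & Hi' & Hp & Hw & Hr & Hb)]%covered_inv.
  - apply (ring_not_solid K s s' i _ _ (proj1 Hi)) in Hs; [exact Hs|].
    unfold ring, O2. lia.
  - destruct (hole_center_near_eq K s' s i' i) as [-> ->]; [apply Hi' | apply Hi | ..];
      [unfold ring, O2 in Hr; lia ..|].
    rewrite (listed_unique K i e' e Hi' Hi) in Hp.
    destruct (W_column_congr _ _ _ Hw (Hal k j Hp)) as [r Hr'].
    apply (blocker_avoids_n n k _ n_pos Hcop Hb). exists r. lia.
Qed.

Lemma aligned_hole_top_covered s i e t h : listed K i e -> aligned s e t ->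
  h = 6 * t \/ h = 6 * t + 2 * N ->
  covered (fst (hole_center K s i), snd (hole_center K s i) + 1, h).
Proof.
  intros Hi Hal Hh. destruct e as [g [[a b] c]].
  assert (Hr : ring (hole_center K s i) (fst (hole_center K s i)) (snd (hole_center K s i) + 1))
    by (unfold ring, O2; lia).
  destruct Hh as [-> | ->].
  - assert (Hp : piece (g, (a, b, c)) 0 a) by now left.
    apply (covered_piece s i _ 0 a (t + a) _ _ _ Hi Hp (Hal _ _ Hp) Hr).
    eapply blocker_eq; [|exact (blocker_alpha_0 n n_pos)]. lia.
  - destruct (piece_gamma g a b c (listed_group K i g _ Hi)) as (k & j & Hp & Hk).
    apply (covered_piece s i _ k j (t + j) _ _ _ Hi Hp (Hal k j Hp) Hr).
    eapply blocker_eq; [|exact (blocker_gamma_2n n k n_pos Hk)]. lia.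
Qed.

(* The filler ring through the uncovered cell contains a solid cell of [B0]
   unless it is centred on the hole; then its second level is [6 t] or
   [6 t + 2 n], where the cell is covered by the alpha or a gamma blocker. *)
Lemma aligned_hole_absurd s i e t : Nat.gcd n 6 = 1%nat -> listed K i e -> ~ aligned s e t.
Proof.
  intros Hcop Hi Hal.
  pose proof (aligned_hole_uncovered s i e t Hcop Hi Hal) as Hh%filled_iff.
  pose proof (aligned_hole_top_covered s i e t) as Htop.
  destruct (hole_center K s i) as [cx cy] eqn:Ec. cbn [fst snd] in Hh, Htop.
  destruct (filler_ring n W' _ _ _ W'_nonoverlap Hh) as ([qx qy] & ez & Hq & Hez & Hring & _).
  unfold ring, O2 in Hq; cbn [fst snd] in Hq.
  assert (Hsolid : forall x y h,
            solid (mK K) (x - L * fst s) (y - 5 * snd s) -> ~ filled (x, y, h)).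
  { intros x y h Hxy Hf. apply (proj2 (filled_iff _) Hf).
    destruct e as [g [[a b] c]]. apply (covered_solid s (t + a)); [|exact Hxy].
    rewrite <- (add2_src0 s). apply Hal. now left. }
  assert (Hcx : cx = L * fst s + 3 * Z.of_nat i - 1 /\ cy = 5 * snd s + 2).
  { unfold hole_center in Ec. now injection Ec as <- <-. }
  destruct (Z.eq_dec qy (cy + 2)) as [-> | Hqy].
  { apply (Hsolid (qx + 1) (cy + 2) (6 * t + N)).
    - replace (cy + 2 - 5 * snd s) with 4 by lia. apply solid_top_row.
      unfold brick_width in *. destruct Hi as [Hi _]. lia.
    - apply Hring. unfold ring, O2; cbn [fst snd]. lia. }
  destruct (classic (qx = cx /\ qy = cy)) as [[-> ->] | Hqc].
  - destruct (Hring cx (cy + 1)) as [_ Hf]; [unfold ring, O2; cbn [fst snd]; lia|].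
    apply (proj2 (filled_iff _) Hf), Htop; [exact Hi | exact Hal | lia].
  - apply (Hsolid cx cy (6 * t + N)).
    + replace (cx - L * fst s) with (3 * Z.of_nat i - 1) by lia.
      replace (cy - 5 * snd s) with 2 by lia. apply solid_hole_center, Hi.
    + apply Hring. unfold ring, O2; cbn [fst snd]. lia.
Qed.

End FillerTiling.

Theorem lemma4p3 (n : nat) (S : nat -> Z -> Z -> Z -> Prop) (K : nat -> list pt) (W : zset) :
  cyclic_triomino_set n S ->
  Nat.gcd n 6 = 1%nat ->
  (forall i, (1 <= i <= 4)%nat -> rep_system n S i (K i)) ->
  (forall w, W w -> exists x y z, w = ((3 * Z.of_nat (mK K) + 2) * x, 5 * y, 6 * z)) ->
  (forall w, W w <-> W (padd w (0, 0, 6 * Z.of_nat n))) ->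
  nonoverlap W (brick n K) ->
  tiles (filler n) (fun w => ~ sumset W (brick n K) w) ->
  solvable n S.
Proof.
  intros _ Hgcd Hrep Hlat Hper Hno (W' & Hno' & Hfill).
  assert (Hn : (0 < n)%nat) by (destruct n; [discriminate | lia]).
  set (height s := epsilon (inhabits 0) (fun z => W (column_point K s z))).
  assert (Hrange : forall s, inZn n (height s mod Z.of_nat n))
    by (intros s; apply Z.mod_pos_bound; lia).
  exists (fun s => height s mod Z.of_nat n). split; [exact Hrange|].
  intros s g Hg. apply NNPP. intros HnS.
  destruct (Hrep g Hg) as (_ & Hiff & _).
  destruct (proj2 (Hiff _ _ _ (Hrange _) (Hrange _) (Hrange _)) HnS) as (j & t & Hj & _ & Hr).
  destruct (nth j (K g) (0, 0, 0)) as [[a b] c] eqn:Ej. destruct Hr as (Ha & Hb & Hc).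
  destruct (In_listed K (g, (a, b, c))) as [i Hi].
  { apply In_listing. split; [exact Hg|]. rewrite <- Ej. now apply nth_In. }
  assert (Hheight : forall s', W (column_point K s' (height s'))).
  { intros s'. apply epsilon_spec, (column_nonempty n K W W'); auto.
    destruct Hi as [Hi _]. lia. }
  apply (aligned_hole_absurd n K W W' Hn Hlat Hper Hno Hno' Hfill s i _ t Hgcd Hi).
  intros k j' Hk. apply (W_column_mod n K W Hn Hper _ _ _ (Hheight _)).
  rewrite Z.add_comm.
  destruct Hk as [[-> ->] | [[-> ->] | [-> ->]]].
  - now rewrite add2_src0.
  - now rewrite src_u by lia.
  - now rewrite src_u by lia.
Qed.
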